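(* For $k\ge0$ let $\bar H_k\in\mathbb{R}^{p\times p}$ be (random) symmetric matrices with symmetric indefinite factorizations $\bar H_k=P_k^TL_kB_kL_k^TP_k$, and suppose $\bar H_k\to H(\theta^* )$ a.s. Let $B_k=Q_k\Lambda_kQ_k^T$ be an eigendecomposition, $\Lambda_k=\mathrm{diag}(\lambda_{k1},\dots,\lambda_{kp})$, and with a constant threshold $\underline{\tau}>0$ set $\bar\Lambda_k=\mathrm{diag}(\max\{\underline{\tau},|\lambda_{kj}|\})_{j=1}^p$ and $\bar{\bar H}_k=P_k^TL_kQ_k\bar\Lambda_kQ_k^TL_k^TP_k$. Assume the eigenvalues of $H(\theta^* )$ satisfy $0<\underline{\lambda}^*<|\lambda_j(H(\theta^* ))|<\bar\lambda^*<\infty$ for $j=1,\dots,p$. Then there exists $K_2$ such that for all $k>K_2$ the eigenvalues and the condition number of $\bar{\bar H}_k$ are bounded uniformly in $k$.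
   Context: In the factorization: $P_k$ permutation, $B_k$ block diagonal with symmetric $1\times1$ or $2\times2$ blocks, $L_k$ unit lower triangular with entries bounded in magnitude by a fixed constant independent of $k$; hence there are constants $0<\underline{\sigma}\le\bar\sigma$, independent of $k$ and the sample path, with all singular values of $L_k$ in $[\underline{\sigma},\bar\sigma]$. $H(\theta^* )$ is the Hessian of the loss at its minimizer and $\bar H_k$ the running Hessian estimate of a second-order simultaneous-perturbation stochastic approximation algorithm. *)

From HB Require Import structures.
From mathcomp Require Import all_boot all_order all_algebra.
From mathcomp Require Import all_classical all_reals.
From mathcomp Require Import all_analysis.
Set Implicit Arguments. Unset Strict Implicit. Unset Printing Implicit Defensive.
Import Order.TTheory GRing.Theory Num.Theory.
Local Open Scope ring_scope.
Local Open Scope classical_set_scope.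

Section Defs.
Variable R : realType.

Definition sqnorm (p : nat) (x : 'cV[R]_p) : R := \sum_(i < p) (x i 0) ^+ 2.

Definition opnorm2 (p : nat) (A : 'M[R]_p) : R :=
  sup [set Num.sqrt (sqnorm (A *m x)) | x in [set x : 'cV[R]_p | sqnorm x = 1]].

Definition cond2 (p : nat) (A : 'M[R]_p) : R := opnorm2 A * opnorm2 (invmx A).

Definition unit_lower_tri (p : nat) (L : 'M[R]_p) : Prop :=
  (forall i j : 'I_p, (i < j)%N -> L i j = 0) /\ (forall i : 'I_p, L i i = 1).

(* all singular values of L lie in [slo, shi], i.e. slo ||x|| <= ||L x|| <= shi ||x|| *)
Definition sing_vals_in (p : nat) (L : 'M[R]_p) (slo shi : R) : Prop :=
  forall x : 'cV[R]_p,
    slo ^+ 2 * sqnorm x <= sqnorm (L *m x) <= shi ^+ 2 * sqnorm x.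

(* symmetric block diagonal with 1x1 or 2x2 diagonal blocks: symmetric,
   tridiagonal, and no two consecutive off-diagonal entries are nonzero
   (so the 2x2 blocks do not overlap). *)
Definition block_diag_12 (p : nat) (B : 'M[R]_p) : Prop :=
  B^T = B /\
  (forall i j : 'I_p, (i.+1 < j)%N -> B i j = 0) /\
  (forall i j k : 'I_p, j = i.+1 :> nat -> k = j.+1 :> nat -> B i j = 0 \/ B j k = 0).

End Defs.

From HB Require Import structures.
From mathcomp Require Import all_boot all_order all_algebra.
From mathcomp Require Import all_classical all_reals.
From mathcomp Require Import all_analysis.
From mathcomp Require Import ring lra fingroup perm.
Import Order.TTheory GRing.Theory Num.Theory numFieldNormedType.Exports.
Set Implicit Arguments. Unset Strict Implicit. Unset Printing Implicit Defensive.
Local Open Scope ring_scope.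
Local Open Scope classical_set_scope.

(** Write [HHbar_k = M_k^T D_k M_k] with [M_k = Q_k^T L_k^T P_k] and
  [D_k = diag(max(tau, |lam_kj|))].  Since [P_k] and [Q_k] are orthogonal,
  [M_k] stretches squared lengths by a factor in [[slo^2, shi^2]].  The
  entries of [D_k] are at least [tau]; they are also bounded above uniformly
  for large [k]: the entries of [Hbar_k] converge, so [Hbar_k] is eventually
  bounded, hence so is [B_k = (P_k^T L_k)^-1 Hbar_k (P_k^T L_k)^-T] and with it
  its eigenvalues [lam_kj].  So [HHbar_k] is symmetric positive definite with
  [tau slo^2 |x| <= |HHbar_k x| <= shi^2 (tau + sup |lam_kj|) |x|], which
  bounds its eigenvalues and its condition number.  Only the boundedness of
  the convergent sequence [Hbar_k] is used: the spectral assumptions on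
  [H(theta^* )], the entry bound on [L_k] and the block structure of [B_k] are
  not needed. *)

Section SquaredGain.
Variables (R : realType) (p : nat).
Implicit Types (A B G H U X : 'M[R]_p) (x u v : 'cV[R]_p) (d : 'rV[R]_p).
Implicit Types (a t m n M N : R).

Definition dot u v : R := \sum_(i < p) u i 0 * v i 0.

Lemma dotC u v : dot u v = dot v u.
Proof. by apply: eq_bigr => i _; rewrite mulrC. Qed.

Lemma dot_trmx A u v : dot (A *m u) v = dot u (A^T *m v).
Proof.
have dotE w z : dot w z = (w^T *m z) 0 0.
  by rewrite mxE; apply: eq_bigr => i _; rewrite mxE.
by rewrite !dotE trmx_mul mulmxA.
Qed.

Lemma sqnorm_dot x : sqnorm x = dot x x.
Proof. by apply: eq_bigr => i _; rewrite expr2. Qed.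

Lemma sqnorm_ge0 x : 0 <= sqnorm x.
Proof. by apply: sumr_ge0 => i _; rewrite sqr_ge0. Qed.

Lemma sqnorm_eq0 x : sqnorm x = 0 -> x = 0.
Proof.
move=> /psumr_eq0P x0; apply/matrixP => i j; rewrite (ord1 j) mxE.
by apply/eqP; rewrite -sqrf_eq0; apply/eqP/x0 => // k _; rewrite sqr_ge0.
Qed.

Lemma sqnormZ a x : sqnorm (a *: x) = a ^+ 2 * sqnorm x.
Proof. by rewrite /sqnorm mulr_sumr; apply: eq_bigr => i _; rewrite mxE exprMn. Qed.

Lemma dotZr_self a x : dot x (a *: x) = a * sqnorm x.
Proof. by rewrite /dot /sqnorm mulr_sumr; apply: eq_bigr => i _; rewrite mxE; ring. Qed.

(* [2 a b <= t a^2 + b^2 / t], summed over the coordinates. *)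
Lemma dot_le_sqnorm t u v : 0 < t -> 2 * dot u v <= t * sqnorm u + sqnorm v / t.
Proof.
move=> t0; rewrite /dot /sqnorm mulr_sumr mulr_sumr mulr_suml -big_split /=.
apply: ler_sum => i _; set a := u i 0; set b := v i 0.
have -> : t * a ^+ 2 + b ^+ 2 / t = 2 * (a * b) + (t * a - b) ^+ 2 / t.
  by field; rewrite gt_eqF.
by rewrite lerDl divr_ge0 ?sqr_ge0 // ltW.
Qed.

(* Cauchy-Schwarz against the all-ones vector. *)
Lemma sqr_sum_le (a : 'I_p -> R) : (\sum_i a i) ^+ 2 <= p%:R * \sum_i a i ^+ 2.
Proof.
rewrite expr2 mulr_suml.
apply: (@le_trans _ _ (\sum_i \sum_j (a i ^+ 2 + a j ^+ 2) / 2)).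
  apply: ler_sum => i _; rewrite mulr_sumr; apply: ler_sum => j _.
  have := sqr_ge0 (a i - a j); rewrite sqrrB -mulr_natr; lra.
under eq_bigr => i _ do rewrite -mulr_suml big_split /= sumr_const card_ord.
rewrite -mulr_suml big_split /= sumr_const card_ord sumrMnl.
move: (\sum_(i < p) a i ^+ 2) => S; rewrite -mulr_natr; lra.
Qed.

Definition gain_le A (M : R) := forall x, sqnorm (A *m x) <= M * sqnorm x.
Definition gain_ge A (m : R) := forall x, m * sqnorm x <= sqnorm (A *m x).

Lemma gain_le_mul A B M N : 0 <= M -> gain_le A M -> gain_le B N ->
  gain_le (A *m B) (M * N).
Proof. by move=> M0 hA hB x; rewrite -mulmxA (le_trans (hA _)) // -mulrA ler_wpM2l. Qed.

Lemma gain_ge_mul A B m n : 0 <= m -> gain_ge A m -> gain_ge B n ->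
  gain_ge (A *m B) (m * n).
Proof. by move=> m0 hA hB x; rewrite -mulmxA (le_trans _ (hA _)) // -mulrA ler_wpM2l. Qed.

(* With [w = A^T y]: [2 |w|^2 = 2 <y, A w> <= M |y|^2 + |A w|^2 / M <= M |y|^2 + |w|^2]. *)
Lemma gain_le_trmx A M : 0 < M -> gain_le A M -> gain_le A^T M.
Proof.
move=> M0 hA y; set w := A^T *m y.
have e : sqnorm w = dot y (A *m w) by rewrite sqnorm_dot {1}/w dot_trmx trmxK.
have := dot_le_sqnorm y (A *m w) M0; rewrite -e.
have : sqnorm (A *m w) / M <= sqnorm w by rewrite ler_pdivrMr // mulrC.
lra.
Qed.

(* With [y = A z]: [2 |y|^2 = 2 <z, A^T y> <= m |z|^2 + |A^T y|^2 / m <= |y|^2 + |A^T y|^2 / m]. *)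
Lemma gain_ge_trmx A m : 0 < m -> A \in unitmx -> gain_ge A m -> gain_ge A^T m.
Proof.
move=> m0 uA hA y; set z := invmx A *m y; set w := A^T *m y.
have yz : y = A *m z by rewrite /z mulKVmx.
have e : sqnorm y = dot z w by rewrite sqnorm_dot {1}yz dot_trmx.
have := dot_le_sqnorm z w m0; rewrite -e => hzw.
have := hA z; rewrite -yz => hz.
have := sqnorm_ge0 z => z0.
have : sqnorm y <= sqnorm w / m by nra.
by rewrite ler_pdivlMr // mulrC.
Qed.

Lemma gain_le_cancell X A M m : 0 < m -> gain_ge X m -> gain_le (X *m A) M ->
  gain_le A (M / m).
Proof.
move=> m0 hX hXA x; rewrite mulrAC ler_pdivlMr // mulrC.
by rewrite (le_trans (hX _)) // mulmxA.
Qed.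

Lemma gain_le_cancelr X A M m : 0 <= M -> 0 < m -> X \in unitmx -> gain_ge X m ->
  gain_le (A *m X) M -> gain_le A (M / m).
Proof.
move=> M0 m0 uX hX hAX y; have := hAX (invmx X *m y); rewrite -mulmxA mulKVmx // => hy.
rewrite (le_trans hy) // -mulrA; apply: ler_wpM2l => //.
by rewrite ler_pdivlMl //; have := hX (invmx X *m y); rewrite mulKVmx.
Qed.

Lemma sqnorm_orthomx U x : U^T *m U = 1%:M -> sqnorm (U *m x) = sqnorm x.
Proof. by move=> hU; rewrite !sqnorm_dot dot_trmx mulmxA hU mul1mx. Qed.

Lemma perm_mx_orthogonal (P : 'M[R]_p) : is_perm_mx P -> P^T *m P = 1%:M.
Proof.
by move=> /is_perm_mxP [s ->]; rewrite tr_perm_mx -perm_mxM mulVg perm_mx1.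
Qed.

Lemma gain_le_orthomxl U A M : U^T *m U = 1%:M -> gain_le A M -> gain_le (U *m A) M.
Proof. by move=> hU hA x; rewrite -mulmxA sqnorm_orthomx. Qed.

Lemma gain_le_orthomxr U A M : U^T *m U = 1%:M -> gain_le A M -> gain_le (A *m U) M.
Proof. by move=> hU hA x; rewrite -mulmxA -(sqnorm_orthomx x hU). Qed.

Lemma gain_ge_orthomxl U A m : U^T *m U = 1%:M -> gain_ge A m -> gain_ge (U *m A) m.
Proof. by move=> hU hA x; rewrite -mulmxA sqnorm_orthomx. Qed.

Lemma gain_ge_orthomxr U A m : U^T *m U = 1%:M -> gain_ge A m -> gain_ge (A *m U) m.
Proof. by move=> hU hA x; rewrite -mulmxA -(sqnorm_orthomx x hU). Qed.

Lemma gain_le_entrywise A t : 0 <= t -> (forall i j, `|A i j| <= t) ->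
  gain_le A (p%:R ^+ 2 * t ^+ 2).
Proof.
move=> t0 hA x.
apply: (@le_trans _ _ (\sum_(i < p) p%:R * (t ^+ 2 * sqnorm x))); last first.
  by rewrite sumr_const card_ord -mulr_natl; lra.
apply: ler_sum => i _; rewrite mxE; apply: (le_trans (sqr_sum_le _)).
rewrite ler_wpM2l // /sqnorm mulr_sumr; apply: ler_sum => j _.
rewrite exprMn ler_wpM2r ?sqr_ge0 //.
by rewrite -real_normK ?num_real // ler_sqr ?nnegrE.
Qed.

Lemma sqnorm_diag_mx d x : sqnorm (diag_mx d *m x) = \sum_i d 0 i ^+ 2 * x i 0 ^+ 2.
Proof. by rewrite /sqnorm mul_diag_mx; apply: eq_bigr => i _; rewrite mxE exprMn. Qed.

Lemma gain_le_diag_mx d M : (forall i, `|d 0 i| <= M) -> gain_le (diag_mx d) (M ^+ 2).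
Proof.
move=> hd x; rewrite sqnorm_diag_mx /sqnorm mulr_sumr; apply: ler_sum => i _.
rewrite ler_wpM2r ?sqr_ge0 // -real_normK ?num_real // ler_sqr ?nnegrE //.
exact: le_trans (hd i).
Qed.

Lemma gain_ge_diag_mx d m : 0 <= m -> (forall i, m <= d 0 i) ->
  gain_ge (diag_mx d) (m ^+ 2).
Proof.
move=> m0 hd x; rewrite sqnorm_diag_mx /sqnorm mulr_sumr; apply: ler_sum => i _.
by rewrite ler_wpM2r ?sqr_ge0 // ler_sqr ?nnegrE // (le_trans m0).
Qed.

Lemma diag_mx_entry_le d M i : gain_le (diag_mx d) M -> `|d 0 i| <= Num.sqrt M.
Proof.
move=> hd; have := hd (delta_mx i 0); rewrite sqnorm_diag_mx /sqnorm.
rewrite (bigD1 i) //= big1; last by move=> k /negPf ki; rewrite mxE ki expr0n mulr0.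
rewrite (bigD1 i) //= big1; last by move=> k /negPf ki; rewrite mxE ki expr0n.
rewrite !mxE !eqxx expr1n !addr0 !mulr1 => hi.
by rewrite -sqrtr_sqr ler_sqrt // (le_trans _ hi) ?sqr_ge0.
Qed.

Lemma unitmx_diag_gt0 d : (forall i, 0 < d 0 i) -> diag_mx d \in unitmx.
Proof.
move=> hd; rewrite unitmxE det_trig ?diag_mx_is_trig // unitfE gt_eqF //.
by apply: prodr_gt0 => i _; rewrite mxE eqxx mulr1n.
Qed.

Lemma opnorm2_le A M : 0 <= M -> gain_le A (M ^+ 2) -> 0 <= opnorm2 A <= M.
Proof.
move=> M0 hA; rewrite /opnorm2; set S := [set _ | _ in _].
have ubS : ubound S M.
  move=> _ [x /= x1 <-]; rewrite -(ger0_norm M0) -sqrtr_sqr ler_sqrt ?sqr_ge0 //.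
  by have := hA x; rewrite x1 mulr1.
have [[x0 x01]|nox] := pselect (exists x : 'cV[R]_p, sqnorm x = 1).
  have Sx0 : S (Num.sqrt (sqnorm (A *m x0))) by exists x0.
  rewrite (le_trans (sqrtr_ge0 _) (ub_le_sup _ Sx0)); last by exists M.
  by rewrite ge_sup //; exists (Num.sqrt (sqnorm (A *m x0))).
suff -> : S = set0 by rewrite sup0 lexx.
by apply/seteqP; split => // _ [x /= x1 _]; apply: nox; exists x.
Qed.

Lemma cond2_le H m M : 0 < m -> 0 <= M -> H \in unitmx ->
  gain_ge H (m ^+ 2) -> gain_le H (M ^+ 2) -> cond2 H <= M / m.
Proof.
move=> m0 M0 uH hge hle; have /andP[n0 nM] := opnorm2_le M0 hle.
have hinv : gain_le (invmx H) (m^-1 ^+ 2).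
  move=> y; rewrite exprVn ler_pdivlMl ?exprn_gt0 //.
  by have := hge (invmx H *m y); rewrite mulKVmx.
have im0 : 0 <= m^-1 by rewrite invr_ge0 ltW.
have /andP[ninv0 ninv] := opnorm2_le im0 hinv.
by rewrite /cond2; apply: ler_pM.
Qed.

Lemma eigenvalue_gain H a m M : H^T = H -> (forall x, 0 <= dot x (H *m x)) ->
  0 <= m -> 0 <= M -> gain_ge H (m ^+ 2) -> gain_le H (M ^+ 2) ->
  eigenvalue H a -> m <= a <= M.
Proof.
move=> Hsym Hpsd m0 M0 hge hle /eigenvalueP [v hv v0].
have hx : H *m v^T = a *: v^T by rewrite -{1}Hsym -trmx_mul hv linearZ.
have x0 : 0 < sqnorm v^T.
  rewrite lt_def sqnorm_ge0 andbT; apply: contra v0 => /eqP /sqnorm_eq0.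
  by move=> /(congr1 trmx); rewrite trmxK trmx0 => ->.
have a0 : 0 <= a by have := Hpsd v^T; rewrite hx dotZr_self pmulr_lge0.
have := hge v^T; have := hle v^T; rewrite hx sqnormZ !ler_pM2r //.
by rewrite !ler_sqr ?nnegrE // => -> ->.
Qed.

Lemma congr_diag_mx_sym G d :
  (G^T *m diag_mx d *m G)^T = G^T *m diag_mx d *m G.
Proof. by rewrite !trmx_mul trmxK tr_diag_mx mulmxA. Qed.

Lemma congr_diag_mx_psd G d x : (forall i, 0 <= d 0 i) ->
  0 <= dot x (G^T *m diag_mx d *m G *m x).
Proof.
move=> hd; rewrite -!mulmxA dotC dot_trmx trmxK dotC.
move: (G *m x) => y; apply: sumr_ge0 => i _; rewrite mul_diag_mx mxE mulrCA -expr2.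
exact: mulr_ge0 (hd i) (sqr_ge0 _).
Qed.

Lemma gain_le_congr_diag_mx G d S T : gain_le G (S ^+ 2) -> gain_le G^T (S ^+ 2) ->
  (forall i, `|d 0 i| <= T) -> gain_le (G^T *m diag_mx d *m G) ((T * S ^+ 2) ^+ 2).
Proof.
move=> hG hGT hd; have S20 : 0 <= S ^+ 2 by rewrite sqr_ge0.
have := gain_le_mul _ (gain_le_mul S20 hGT (gain_le_diag_mx hd)) hG.
by rewrite [X in gain_le _ X]
  (_ : _ = (T * S ^+ 2) ^+ 2); [apply; rewrite mulr_ge0 ?sqr_ge0 | ring].
Qed.

Lemma gain_ge_congr_diag_mx G d s t : 0 <= t -> gain_ge G (s ^+ 2) ->
  gain_ge G^T (s ^+ 2) -> (forall i, t <= d 0 i) ->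
  gain_ge (G^T *m diag_mx d *m G) ((t * s ^+ 2) ^+ 2).
Proof.
move=> t0 hG hGT hd; have s20 : 0 <= s ^+ 2 by rewrite sqr_ge0.
have := gain_ge_mul _ (gain_ge_mul s20 hGT (gain_ge_diag_mx t0 hd)) hG.
by rewrite [X in gain_ge _ X]
  (_ : _ = (t * s ^+ 2) ^+ 2); [apply; rewrite mulr_ge0 ?sqr_ge0 | ring].
Qed.

Lemma eigdec_entry_le Q B d M i : Q^T *m Q = 1%:M ->
  B = Q *m diag_mx d *m Q^T -> gain_le B M -> `|d 0 i| <= Num.sqrt M.
Proof.
move=> hQ hB hBM; apply: diag_mx_entry_le.
have -> : diag_mx d = Q^T *m B *m Q.
  by rewrite hB !mulmxA hQ mul1mx -mulmxA hQ mulmx1.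
have hQT : Q^T^T *m Q^T = 1%:M by rewrite trmxK; apply: mulmx1C.
exact: gain_le_orthomxr hQ (gain_le_orthomxl hQT hBM).
Qed.

Lemma unit_lower_tri_unitmx (L : 'M[R]_p) : unit_lower_tri L -> L \in unitmx.
Proof.
move=> [upper0 diag1]; rewrite unitmxE det_trig; last exact/is_trig_mxP.
by rewrite big1 ?unitr1.
Qed.

End SquaredGain.

Lemma cvg_mx_entries_bounded (R : realType) m n (A : nat -> 'M[R]_(m, n))
    (A0 : 'M[R]_(m, n)) :
  (forall i j, (fun k => A k i j) @ \oo --> A0 i j) ->
  exists2 C, 0 <= C & \forall k \near \oo, forall i j, `|A k i j| <= C.
Proof.
move=> hA; exists (1 + \sum_(ij : 'I_m * 'I_n) `|A0 ij.1 ij.2|).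
  by rewrite addr_ge0 ?sumr_ge0.
apply: filter_forall => i; apply: filter_forall => j.
move: (hA i j) => /cvgr_dist_lt /(_ _ ltr01); apply: filterS => k hk.
have hij : `|A0 i j| <= \sum_(ij : 'I_m * 'I_n) `|A0 ij.1 ij.2|.
  by rewrite (bigD1 (i, j)) //= lerDl sumr_ge0.
have := ler_normD (A0 i j) (A k i j - A0 i j).
rewrite addrCA subrr addr0 distrC; lra.
Qed.

Section LDLFactorization.
Variables (R : realType) (p : nat) (P L Q : 'M[R]_p) (slo shi : R).
Hypotheses (HP : is_perm_mx P) (HL : unit_lower_tri L) (HQ : Q^T *m Q = 1%:M).
Hypotheses (Hslo : 0 < slo) (Hsle : slo <= shi) (HLsv : sing_vals_in L slo shi).

Let uL : L \in unitmx := unit_lower_tri_unitmx HL.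
Let HP' : P^T *m P = 1%:M := perm_mx_orthogonal HP.
Let uP : P \in unitmx := (mulmx1_unit HP').2.
Let uQ : Q \in unitmx := (mulmx1_unit HQ).2.
Let gain_le_L : gain_le L (shi ^+ 2). Proof. by move=> x; case/andP: (HLsv x). Qed.
Let gain_ge_L : gain_ge L (slo ^+ 2). Proof. by move=> x; case/andP: (HLsv x). Qed.
Let hPT : P^T^T *m P^T = 1%:M.
Proof. by rewrite trmxK; apply/mulmx1C/perm_mx_orthogonal. Qed.
Let hQT : Q^T^T *m Q^T = 1%:M. Proof. by rewrite trmxK; apply: mulmx1C. Qed.
Let slo2_gt0 : 0 < slo ^+ 2. Proof. exact: exprn_gt0. Qed.
Let shi2_gt0 : 0 < shi ^+ 2. Proof. exact/exprn_gt0/(lt_le_trans Hslo). Qed.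

Lemma gain_le_ldl_factor B M : 0 <= M ->
  gain_le (P^T *m L *m B *m L^T *m P) M -> gain_le B (M / slo ^+ 2 / slo ^+ 2).
Proof.
move=> M0; set X := P^T *m L.
have -> : P^T *m L *m B *m L^T *m P = X *m (B *m X^T).
  by rewrite /X trmx_mul trmxK !mulmxA.
have uX : X \in unitmx by rewrite unitmx_mul unitmx_tr uL uP.
have hX : gain_ge X (slo ^+ 2) := gain_ge_orthomxl hPT gain_ge_L.
move=> /(gain_le_cancell slo2_gt0 hX); apply: gain_le_cancelr => //.
- by rewrite divr_ge0 // ltW.
- by rewrite unitmx_tr.
- exact: gain_ge_trmx.
Qed.

Let G := Q^T *m L^T *m P.
Let uG : G \in unitmx. Proof. by rewrite !unitmx_mul !unitmx_tr uL uP uQ. Qed.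
Let trG : G^T = P^T *m L *m Q. Proof. by rewrite !trmx_mul !trmxK mulmxA. Qed.

Lemma gain_le_ldl_congr (d : 'rV[R]_p) (T : R) : (forall i, `|d 0 i| <= T) ->
  gain_le (G^T *m diag_mx d *m G) ((T * shi ^+ 2) ^+ 2).
Proof.
apply: gain_le_congr_diag_mx.
  exact: gain_le_orthomxr HP' (gain_le_orthomxl hQT (gain_le_trmx shi2_gt0 gain_le_L)).
by rewrite trG; exact: gain_le_orthomxr HQ (gain_le_orthomxl hPT gain_le_L).
Qed.

Lemma gain_ge_ldl_congr (d : 'rV[R]_p) (t : R) : 0 <= t -> (forall i, t <= d 0 i) ->
  gain_ge (G^T *m diag_mx d *m G) ((t * slo ^+ 2) ^+ 2).
Proof.
move=> t0; apply: gain_ge_congr_diag_mx => //.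
  exact: gain_ge_orthomxr HP' (gain_ge_orthomxl hQT (gain_ge_trmx slo2_gt0 uL gain_ge_L)).
by rewrite trG; exact: gain_ge_orthomxr HQ (gain_ge_orthomxl hPT gain_ge_L).
Qed.

Lemma ldl_congr_spectral_bounds (d : 'rV[R]_p) (t T : R) :
    0 < t -> t <= T -> (forall i, t <= d 0 i <= T) ->
  let H := G^T *m diag_mx d *m G in
  (forall a, eigenvalue H a -> t * slo ^+ 2 <= a <= T * shi ^+ 2) /\
  cond2 H <= T * shi ^+ 2 / (t * slo ^+ 2).
Proof.
move=> t0 tT hd H.
have d_ge i : t <= d 0 i by case/andP: (hd i).
have d_gt0 i : 0 < d 0 i by apply: lt_le_trans t0 (d_ge i).
have d_le i : `|d 0 i| <= T by rewrite gtr0_norm //; case/andP: (hd i).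
have hge := gain_ge_ldl_congr (ltW t0) d_ge; have hle := gain_le_ldl_congr d_le.
have lo_gt0 : 0 < t * slo ^+ 2 by rewrite mulr_gt0.
have hi_ge0 : 0 <= T * shi ^+ 2 by rewrite mulr_ge0 ?sqr_ge0 // (le_trans (ltW t0)).
split=> [a|].
  apply: (eigenvalue_gain (congr_diag_mx_sym _ _) _ (ltW lo_gt0) hi_ge0 hge hle).
  by move=> x; apply: congr_diag_mx_psd => i; apply: ltW.
apply: (cond2_le lo_gt0 hi_ge0 _ hge hle).
by rewrite unitmx_mul unitmx_mul unitmx_tr uG unitmx_diag_gt0.
Qed.

End LDLFactorization.


Theorem theoremA4 (R : realType) (p : nat)
  (Hstar : 'M[R]_p) (lam_lo lam_hi tau c slo shi : R)
  (Hbar : nat -> 'M[R]_p) (P L B Q : nat -> 'M[R]_p) (lam : nat -> 'rV[R]_p)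
  (HstarS : Hstar^T = Hstar)
  (Hlam_lo : 0 < lam_lo)
  (Heig : forall a : R, eigenvalue Hstar a -> lam_lo < `|a| < lam_hi)
  (Htau : 0 < tau)
  (Hsym : forall k, (Hbar k)^T = Hbar k)
  (HP : forall k, is_perm_mx (P k))
  (HL : forall k, unit_lower_tri (L k))
  (HLc : forall k (i j : 'I_p), `|L k i j| <= c)
  (Hslo : 0 < slo) (Hsle : slo <= shi)
  (HLsv : forall k, sing_vals_in (L k) slo shi)
  (HB : forall k, block_diag_12 (B k))
  (Hfact : forall k, Hbar k = (P k)^T *m L k *m B k *m (L k)^T *m P k)
  (HQ : forall k, (Q k)^T *m Q k = 1%:M)
  (Heigdec : forall k, B k = Q k *m diag_mx (lam k) *m (Q k)^T)
  (Hconv : forall i j : 'I_p, (fun k => Hbar k i j) @ \oo --> Hstar i j) :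
  let Lbar k := diag_mx (\row_j Num.max tau `|lam k 0 j|) in
  let HHbar k := (P k)^T *m L k *m Q k *m Lbar k *m (Q k)^T *m (L k)^T *m P k in
  exists K2 : nat, exists lo hi kap : R,
    0 < lo /\
    forall k : nat, (K2 < k)%N ->
      (forall a : R, eigenvalue (HHbar k) a -> lo <= a <= hi) /\
      cond2 (HHbar k) <= kap.
Proof.
move=> Lbar HHbar.
have [C C0 [N _ hN]] := cvg_mx_entries_bounded Hconv.
pose Bmax := p%:R ^+ 2 * C ^+ 2 / slo ^+ 2 / slo ^+ 2.
pose T := tau + Num.sqrt Bmax.
have tauT : tau <= T by rewrite lerDl sqrtr_ge0.
exists N, (tau * slo ^+ 2), (T * shi ^+ 2), (T * shi ^+ 2 / (tau * slo ^+ 2)).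
split=> [|k /ltnW /hN hk]; first by rewrite mulr_gt0 ?exprn_gt0.
have hB : gain_le (B k) Bmax.
  have := gain_le_entrywise C0 hk; rewrite Hfact.
  by apply: (gain_le_ldl_factor (HP k) (HL k) Hslo (HLsv k)); rewrite mulr_ge0 ?sqr_ge0.
have hd j : tau <= (\row_j Num.max tau `|lam k 0 j|) 0 j <= T.
  rewrite mxE le_max lexx ge_max tauT /=.
  by rewrite (le_trans (eigdec_entry_le j (HQ k) (Heigdec k) hB)) // lerDr ltW.
have -> : HHbar k = ((Q k)^T *m (L k)^T *m P k)^T *m Lbar k *m
                    ((Q k)^T *m (L k)^T *m P k).
  by rewrite /HHbar !trmx_mul !trmxK !mulmxA.
by have := ldl_congr_spectral_bounds (HP k) (HL k) (HQ k) Hslo Hsle (HLsv k) Htau tauT hd.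
Qed.
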